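(* Let $S\subseteq[n]$ with $|S|=\tau$ and $i\in S$. Then (1) $C_f^{(i)}\le C_f^{(S)}\le C_f$; and (2) $\frac1nC_f^{\otimes}=C_f^{1}\le C_f^{\tau}\le C_f^{n}=C_f$.
   Context: Let $\mathcal{M}=\mathcal{M}_1\times\cdots\times\mathcal{M}_n$, each $\mathcal{M}_i\subset\mathbb{R}^{m_i}$ nonempty compact convex, and $f:\mathbb{R}^m\to\mathbb{R}$ differentiable. Notation: for $S\subseteq[n]$, $x_{(S)}$ is the subvector of blocks in $S$, $\mathcal{M}^{(S)}=\prod_{i\in S}\mathcal{M}_i$, $\nabla_{(S)}f$ the partial gradient, $s_{[S]}$ is $s_{(S)}$ padded by zeros outside $S$. Set curvature: $C_f^{(S)}=\sup\frac{2}{\gamma^2}\big(f(y)-f(x)-\langle y_{(S)}-x_{(S)},\nabla_{(S)}f(x)\rangle\big)$ over $x\in\mathcal{M}$, $s_{(S)}\in\mathcal{M}^{(S)}$, $\gamma\in(0,1]$, $y=x+\gamma(s_{[S]}-x_{[S]})$. $C_f^{(i)}=C_f^{(\{i\})}$ (coordinate curvature), $C_f^{\otimes}=\sum_{i=1}^nC_f^{(i)}$ (product curvature), $C_f=\sup_{x,s\in\mathcal{M},\gamma\in(0,1],y=x+\gamma(s-x)}\frac{2}{\gamma^2}(f(y)-f(x)-\langle y-x,\nabla f(x)\rangle)$ (global curvature), and $C_f^\tau=\binom{n}{\tau}^{-1}\sum_{S\subseteq[n],|S|=\tau}C_f^{(S)}$. *)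

From HB Require Import structures.
From mathcomp Require Import all_boot all_order all_algebra.
From mathcomp Require Import all_classical all_reals all_analysis.
Set Implicit Arguments. Unset Strict Implicit. Unset Printing Implicit Defensive.
Import Order.TTheory GRing.Theory Num.Theory.
Import numFieldNormedType.Exports.
Local Open Scope classical_set_scope.
Local Open Scope ring_scope.

(* Ambient space R^N ('rV[R]_N); the coordinates are partitioned into n blocks
   by blk : 'I_N -> 'I_n, block i playing the role of R^{m_i}. *)
Section Curv.
Variables (R : realType) (N n : nat) (blk : 'I_N -> 'I_n).

Definition padS (S : {set 'I_n}) (x : 'rV[R]_N) : 'rV[R]_N :=
  \row_j (if blk j \in S then x ord0 j else 0).

(* vectors supported on the blocks of S (the image of R^{(S)} in R^N) *)
Definition supported_on (S : {set 'I_n}) (v : 'rV[R]_N) : Prop :=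
  forall j, blk j \notin S -> v ord0 j = 0.

(* s_[S] with s_(S) in M^(S) = prod_{i in S} M_i (each M_i given as a subset
   of the embedded copy of R^{m_i}) *)
Definition inMS (Mi : 'I_n -> set 'rV[R]_N) (S : {set 'I_n}) (s : 'rV[R]_N) : Prop :=
  supported_on S s /\ forall i, i \in S -> Mi i (padS [set i] s).

Definition inM (Mi : 'I_n -> set 'rV[R]_N) (x : 'rV[R]_N) : Prop :=
  forall i, Mi i (padS [set i] x).

Definition grad (f : 'rV[R]_N -> R) (x : 'rV[R]_N) : 'rV[R]_N :=
  \row_j ('D_(delta_mx 0 j) f x).

Definition pgrad_inner (f : 'rV[R]_N -> R) (S : {set 'I_n}) (x y : 'rV[R]_N) : R :=
  \sum_(j | blk j \in S) (y ord0 j - x ord0 j) * grad f x ord0 j.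

Definition CfS (Mi : 'I_n -> set 'rV[R]_N) (f : 'rV[R]_N -> R) (S : {set 'I_n}) : \bar R :=
  ereal_sup [set r | exists x s (g : R), inM Mi x /\ inMS Mi S s /\ 0 < g /\ g <= 1 /\
     r = ((2 / g ^+ 2) * (f (x + g *: (s - padS S x)) - f x
            - pgrad_inner f S x (x + g *: (s - padS S x))))%:E].

Definition Cglob (Mi : 'I_n -> set 'rV[R]_N) (f : 'rV[R]_N -> R) : \bar R :=
  ereal_sup [set r | exists x s (g : R), inM Mi x /\ inM Mi s /\ 0 < g /\ g <= 1 /\
     r = ((2 / g ^+ 2) * (f (x + g *: (s - x)) - f x
            - \sum_j ((x + g *: (s - x)) ord0 j - x ord0 j) * grad f x ord0 j))%:E].

Definition Cprod Mi f : \bar R := (\sum_(i < n) CfS Mi f [set i])%E.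

Definition Ctau Mi f (tau : nat) : \bar R :=
  (((('C(n, tau))%:R : R)^-1)%:E * \sum_(S : {set 'I_n} | #|S| == tau) CfS Mi f S)%E.

End Curv.

From HB Require Import structures.
From mathcomp Require Import all_boot all_order all_algebra.
From mathcomp Require Import all_classical all_reals all_analysis.
Set Implicit Arguments. Unset Strict Implicit. Unset Printing Implicit Defensive.
Import Order.TTheory GRing.Theory Num.Theory.
Import numFieldNormedType.Exports.
Local Open Scope ring_scope.

(* The set curvature is monotone in S: a feasible triple (x, s, g) for S becomes
   one for T ⊇ S by letting s copy x on the blocks of T \ S, which leaves the
   step y - x and the partial inner product unchanged.  Since C_f = C_f^([n]),
   this gives part (1).  Part (2) is then a statement about averages of a
   monotone set function over the sets of size tau: each term is at most the
   value on [n], and double counting the pairs (i, S) with i ∈ S, |S| = tau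
   compares the singleton average with the tau-average. *)

Section SetCurvature.
Variables (R : realType) (N n : nat) (blk : 'I_N -> 'I_n).
Variables (Mi : 'I_n -> set 'rV[R]_N) (f : 'rV[R]_N -> R).

Lemma pgrad_inner_subset (S T : {set 'I_n}) (x y : 'rV[R]_N) : S \subset T ->
  (forall j, blk j \in T -> blk j \notin S -> y ord0 j = x ord0 j) ->
  pgrad_inner blk f S x y = pgrad_inner blk f T x y.
Proof.
move=> /fintype.subsetP sST y_eq_x; rewrite /pgrad_inner.
rewrite [RHS](bigID (fun j => blk j \in S)) /= [X in _ + X]big1 ?addr0.
  by apply: eq_bigl => j; case: (boolP (blk j \in S)) => [/sST ->|_]; rewrite ?andbF.
by move=> j /andP[jT jS]; rewrite y_eq_x ?subrr ?mul0r.
Qed.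

Lemma pgrad_inner_setT (x y : 'rV[R]_N) :
  pgrad_inner blk f [set: 'I_n]%SET x y = \sum_j (y ord0 j - x ord0 j) * grad f x ord0 j.
Proof. by apply: eq_bigl => j; rewrite finset.in_setT. Qed.

Lemma CfS_subset : {homo CfS blk Mi f : S T / S \subset T >-> (S <= T)%E}.
Proof.
move=> S T sST; apply: ereal_sup_le => _ [x [s [g [Mx [[s_supp Ms] [g_gt0 [g_le1 ->]]]]]]].
have /fintype.subsetP sST' := sST.
pose s' := s + padS blk (T :\: S) x.
have step : s' - padS blk T x = s - padS blk S x.
  apply/rowP => j; rewrite !mxE !inE.
  case: (boolP (blk j \in S)) => [jS|jS]; first by rewrite sST' //= addr0.
  by rewrite s_supp // add0r; case: (blk j \in T); rewrite ?subrr ?subr0.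
exists x, s', g; split=> //; split; last first.
  split=> //; split=> //; rewrite step; congr ((_ * (_ - _))%:E).
  apply: pgrad_inner_subset => // j _ jS.
  by rewrite !mxE (negbTE jS) s_supp // subr0 mulr0 addr0.
split=> [j jT|k kT].
  have jS : blk j \notin S by apply: contra jT; apply: sST'.
  by rewrite !mxE !inE (negbTE jT) andbF s_supp // addr0.
have -> : padS blk [set k] s' = padS blk [set k] (if k \in S then s else x).
  apply/rowP => j; rewrite !mxE !inE; case: (eqVneq (blk j) k) => //= jk.
  rewrite jk kT andbT; case: (boolP (k \in S)) => kS /=; first by rewrite addr0.
  by rewrite s_supp ?add0r ?jk.
by case: ifP => [kS|_]; [apply: Ms | apply: Mx].
Qed.

Lemma Cglob_CfS_setT : Cglob blk Mi f = CfS blk Mi f [set: 'I_n]%SET.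
Proof.
have padS_setT x : padS blk [set: 'I_n]%SET x = x.
  by apply/rowP => j; rewrite !mxE finset.in_setT.
rewrite /Cglob /CfS; congr ereal_sup; apply/seteqP; split=> r.
  move=> [x [s [g [Mx [Ms [g_gt0 [g_le1 ->]]]]]]]; exists x, s, g.
  rewrite padS_setT pgrad_inner_setT; split=> //; split=> //.
  by split=> [j|k _]; [rewrite finset.in_setT | apply: Ms].
move=> [x [s [g [Mx [[_ Ms] [g_gt0 [g_le1 ->]]]]]]]; exists x, s, g.
rewrite padS_setT pgrad_inner_setT; split=> //; split=> //.
by move=> k; apply: Ms; rewrite finset.in_setT.
Qed.

End SetCurvature.

Lemma card_draws_mem (n : nat) (i : 'I_n) (tau : nat) : (0 < tau)%N ->
  #|[set S : {set 'I_n} | (#|S| == tau) && (i \in S)]| = 'C(n.-1, tau.-1).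
Proof.
move=> tau_gt0.
pose D := [set A : {set 'I_n} | (A \subset [set~ i]) && (#|A| == tau.-1)].
have notin_D A : A \in D -> i \notin A.
  by rewrite inE => /andP[/fintype.subsetP sAi _]; apply/negP => /sAi; rewrite !inE eqxx.
have -> : [set S : {set 'I_n} | (#|S| == tau) && (i \in S)] = [set i |: A | A in D].
  apply/finset.setP => S; rewrite inE; apply/andP/imsetP => [[/eqP cardS iS]|[A DA ->]].
    exists (S :\ i); last by rewrite finset.setD1K.
    rewrite inE subDset finset.setUCr finset.subsetT /=.
    by rewrite -cardS (cardsD1 i S) iS.
  move: (DA); rewrite inE => /andP[_ /eqP cardA].
  by rewrite cardsU1 (notin_D _ DA) cardA add1n prednK // setU11.
rewrite card_in_imset ?cards_draws ?cardsC1 ?card_ord // => A B DA DB eqAB.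
by rewrite -(setU1K (notin_D _ DA)) -(setU1K (notin_D _ DB)) eqAB.
Qed.

Section CardAverage.
Variables (R : realType) (n : nat) (F : {set 'I_n} -> \bar R).
Local Open Scope ereal_scope.

Definition card_avg (tau : nat) : \bar R :=
  ((('C(n, tau))%:R : R)^-1)%:E * \sum_(S : {set 'I_n} | #|S| == tau) F S.

Lemma card_avg1 : card_avg 1 = ((n%:R : R)^-1)%:E * \sum_(i < n) F [set i].
Proof.
rewrite /card_avg bin1; congr (_ * _).
rewrite (eq_bigl (mem [set [set i] | i : 'I_n])); last first.
  by move=> S; apply/cards1P/imsetP => [[i ->]|[i _ ->]]; exists i.
by rewrite big_imset //= => a b _ _; apply: finset.set1_inj.
Qed.

Lemma card_avgn : card_avg n = F [set: 'I_n]%SET.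
Proof.
rewrite /card_avg binn invr1 mul1e (eq_bigl (pred1 [set: 'I_n]%SET)) ?big_pred1_eq //.
move=> S; have := max_card S; rewrite card_ord => le_S_n.
by rewrite /= eqEcard finset.subsetT cardsT card_ord eqn_leq le_S_n.
Qed.

Hypothesis F_homo : {homo F : A B / A \subset B >-> A <= B}.

Lemma card_avg_le_setT tau : (tau <= n)%N -> card_avg tau <= F [set: 'I_n]%SET.
Proof.
move=> le_tau_n; have bin_n_tau_gt0 : (0 < 'C(n, tau))%N by rewrite bin_gt0.
apply: (@le_trans _ _ (((('C(n, tau))%:R : R)^-1)%:E * (F [set: 'I_n]%SET *+ 'C(n, tau)))).
  apply: lee_wpmul2l; first by rewrite lee_fin invr_ge0 ler0n.
  have -> : F [set: 'I_n]%SET *+ 'C(n, tau) =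
      \sum_(S : {set 'I_n} | #|S| == tau) F [set: 'I_n]%SET.
    rewrite (eq_bigl (fun S => S \in [set S : {set 'I_n} | #|S| == tau])).
      by rewrite sumr_const card_draws card_ord.
    by move=> S; rewrite inE.
  by apply: lee_sum => S _; rewrite F_homo ?finset.subsetT.
by rewrite -mule_natl muleA -EFinM mulVf ?mul1e // pnatr_eq0 -lt0n.
Qed.

Lemma sum_set1_le_sum_card tau : (0 < tau)%N ->
  ('C(n.-1, tau.-1)%:R)%:E * \sum_(i < n) F [set i] <=
  (tau%:R)%:E * \sum_(S : {set 'I_n} | #|S| == tau) F S.
Proof.
have enatmulE (x : \bar R) m : (x *+ m)%E = (x *+ m)%R by [].
move=> tau_gt0; rewrite !mule_natl !enatmulE -!sumrMnl.
have count_supersets (i : 'I_n) : (F [set i] *+ 'C(n.-1, tau.-1))%R =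
    \sum_(S : {set 'I_n} | (#|S| == tau) && (i \in S)) F [set i].
  rewrite -(card_draws_mem i tau_gt0) -sumr_const.
  by apply: eq_bigl => S; rewrite inE.
rewrite (eq_bigr _ (fun i _ => count_supersets i)).
rewrite -(exchange_big_dep xpredT) //=; apply: lee_sum => S /eqP <-.
rewrite -sumr_const; apply: lee_sum => i iS.
by rewrite F_homo // finset.sub1set.
Qed.

Lemma card_avg1_le tau : (0 < tau <= n)%N -> card_avg 1 <= card_avg tau.
Proof.
case/andP=> tau_gt0 le_tau_n; rewrite card_avg1 /card_avg.
have bin_n_tau_gt0 : (0 < 'C(n, tau))%N by rewrite bin_gt0.
have n_gt0 : (0 < n)%N := leq_trans tau_gt0 le_tau_n.
have double_count : (n * 'C(n.-1, tau.-1) = tau * 'C(n, tau))%N.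
  by rewrite mul_bin_diag prednK.
have bin_pred_gt0 : (0 < 'C(n.-1, tau.-1))%N by rewrite bin_gt0 -!subn1 leq_sub2r.
have natr_neq0 m : (0 < m)%N -> (m%:R : R) != 0%R by rewrite pnatr_eq0 -lt0n.
have -> : ((n%:R : R)^-1 = (tau * 'C(n, tau))%:R^-1 * 'C(n.-1, tau.-1)%:R)%R.
  by rewrite -double_count natrM invfM -mulrA mulVf ?mulr1 ?natr_neq0.
have -> : (('C(n, tau)%:R : R)^-1 = (tau * 'C(n, tau))%:R^-1 * tau%:R)%R.
  by rewrite natrM invfM mulrAC mulVf ?mul1r ?natr_neq0.
rewrite !EFinM -!muleA; apply: lee_wpmul2l; last exact: sum_set1_le_sum_card.
by rewrite lee_fin invr_ge0 ler0n.
Qed.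

End CardAverage.

Local Open Scope classical_set_scope.

Theorem lemma1 (R : realType) (N n : nat) (blk : 'I_N -> 'I_n)
  (Mi : 'I_n -> set 'rV[R]_N) (f : 'rV[R]_N -> R)
  (HMsub : forall i, Mi i `<=` supported_on blk [set i])
  (HMne : forall i, Mi i !=set0)
  (HMcpt : forall i, compact (Mi i))
  (HMcvx : forall i, convex_set (Mi i))
  (Hf : forall x, differentiable f x)
  (S : {set 'I_n}) (tau : nat) (i : 'I_n)
  (HS : #|S| = tau) (Hi : i \in S) :
  ((CfS blk Mi f [set i] <= CfS blk Mi f S)%E /\ (CfS blk Mi f S <= Cglob blk Mi f)%E) /\
  ((((n%:R : R)^-1)%:E * Cprod blk Mi f = Ctau blk Mi f 1)%E /\
   (Ctau blk Mi f 1 <= Ctau blk Mi f tau)%E /\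
   (Ctau blk Mi f tau <= Ctau blk Mi f n)%E /\
   Ctau blk Mi f n = Cglob blk Mi f).
Proof.
have CfS_homo := CfS_subset blk Mi f.
have Ctau_card_avg t : Ctau blk Mi f t = card_avg (CfS blk Mi f) t by [].
have tau_gt0 : (0 < tau)%N by rewrite -HS card_gt0; apply/set0Pn; exists i.
have tau_le_n : (tau <= n)%N by rewrite -HS -[leqRHS](card_ord n) max_card.
rewrite Cglob_CfS_setT !Ctau_card_avg card_avgn.
split; first by split; apply: CfS_homo; rewrite ?finset.sub1set ?finset.subsetT.
split; first by rewrite card_avg1.
split; first by apply: card_avg1_le; rewrite ?tau_gt0.
by split=> //; apply: card_avg_le_setT.
Qed.
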